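(* Let $F,G$ be graphs with $F\to G$. Then $\mathsf{HDE}(F,G)\le |V_F|/|V_G|$, $\mathsf{HDE}(F,G)\le \mathsf{CC}(F)/\mathsf{CC}(G)$, and, if $\alpha(G)\ge1$, $\mathsf{HDE}(F,G)\le \alpha(F)/\alpha(G)$.
   Context: Graphs are finite directed graphs $G=(V_G,E_G)$ with $V_G$ nonempty finite and $E_G\subseteq V_G\times V_G$ (loops allowed). Homomorphisms are vertex maps sending edges to edges; $\hom(F,G)$ is their number and $F\to G$ means $\hom(F,G)\ge1$. $\mathsf{HDE}(F,G)=\sup\{c\in\mathbb R:\hom(F,T)\ge\hom(G,T)^c\text{ for all graphs }T\}$. $\mathsf{CC}(H)$ is the number of connected components of $H$ ignoring edge directions. $\alpha(H)$ is the maximum size of a set $I\subseteq V_H$ such that $E_H\cap (I\times I)=\emptyset$ (no edges, including loops, within $I$). *)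

From mathcomp Require Import all_boot.
From Stdlib Require Import Reals.

Set Implicit Arguments.
Unset Strict Implicit.
Unset Printing Implicit Defensive.

Record graph := Graph {
  vert : finType;
  edge : rel vert;
  vert_nonempty : (0 < #|vert|)%N
}.

Definition is_hom (F T : graph) (f : {ffun vert F -> vert T}) : bool :=
  [forall x, forall y, edge x y ==> edge (f x) (f y)].

Definition hom (F T : graph) : nat := #|[pred f : {ffun vert F -> vert T} | is_hom f]|.

Definition hom_to (F G : graph) : Prop := (1 <= hom F G)%N.

(* real power x^c for x >= 0, with 0^c := 0 (only the case c > 0 matters) *)
Definition rpow (x c : R) : R := if Rlt_dec 0 x then Rpower x c else 0%R.

Definition HDE_set (F G : graph) (c : R) : Prop :=
  forall T : graph, (rpow (INR (hom G T)) c <= INR (hom F T))%R.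

(* HDE(F,G) <= r  iff  r is an upper bound of HDE_set F G *)
Definition HDE_le (F G : graph) (r : R) : Prop := is_upper_bound (HDE_set F G) r.

Definition symrel (V : finType) (e : rel V) : rel V := [rel x y | e x y || e y x].
Definition CC (H : graph) : nat := n_comp (symrel (@edge H)) (vert H).

Definition alpha (H : graph) : nat :=
  \max_(I : {set vert H} | [forall x in I, forall y in I, ~~ edge x y]) #|I|.

(* Test against three target families indexed by n, in each of which the
   number of homomorphisms from a graph H grows like a power of n+1 whose
   exponent is the invariant in question: the complete looped graph on n+1
   vertices ((n+1)^|V_H|), n+1 isolated looped vertices ((n+1)^CC(H)), and a
   looped centre with n+1 leaves (between (n+1)^alpha(H) and
   2^|V_H| (n+1)^alpha(H)).  If hom(F,T) >= hom(G,T)^c for all T, comparing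
   logarithms as n -> oo bounds c by the ratio of the exponents. *)

From mathcomp Require Import all_boot.
From Stdlib Require Import Reals Psatz.
(* Reals rebinds [_ ^ _] on nat to [Nat.pow]; restore [expn]. *)
Import ssrnat.

Lemma INR_expn (m n : nat) : INR (m ^ n) = (INR m ^ n)%R.
Proof. by elim: n => [|n IHn]; rewrite ?expn0 // expnS -multE mult_INR IHn. Qed.

Lemma ln_le (x y : R) : (0 < x)%R -> (x <= y)%R -> (ln x <= ln y)%R.
Proof. by move=> x_pos [lt_xy | ->]; [left; apply: ln_increasing | right]. Qed.

Lemma le_of_log_growth (u v C : R) :
  (forall n : nat, u * ln (INR n.+1) <= C + v * ln (INR n.+1))%R -> (u <= v)%R.
Proof.
move=> bound; apply: Rnot_lt_le => lt_vu.
have d_gt0 : (0 < u - v)%R by lra.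
have [n n_big] := INR_unbounded (exp (C / (u - v))).
have ln_big : (C / (u - v) < ln (INR n.+1))%R.
  rewrite -[X in (X < _)%R]ln_exp; apply: ln_increasing; first exact: exp_pos.
  rewrite S_INR; lra.
have : (C < (u - v) * ln (INR n.+1))%R.
  have := Rmult_lt_compat_l _ _ _ d_gt0 ln_big.
  by rewrite /Rdiv Rmult_comm Rmult_assoc Rinv_l ?Rmult_1_r; lra.
have := bound n; lra.
Qed.

Lemma HDE_le_of_growth (F G : graph) (T : nat -> graph) (a b K : nat) :
  (0 < a)%N ->
  (forall n, n.+1 ^ a <= hom G (T n))%N ->
  (forall n, hom F (T n) <= K * n.+1 ^ b)%N ->
  HDE_le F G (INR b / INR a).
Proof.
move=> a_gt0 homG_ge homF_le c admissible_c.
have a_pos : (0 < INR a)%R by apply: lt_0_INR; apply/ltP.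
have [c_le0 | c_gt0] := Rle_or_lt c 0.
  apply: Rle_trans c_le0 _; apply: Rmult_le_pos; first exact: pos_INR.
  by left; apply: Rinv_0_lt_compat.
suff : (c * INR a <= INR b)%R.
  by move=> cab; apply/(Rmult_le_reg_r _ _ _ a_pos); rewrite /Rdiv Rmult_assoc Rinv_l; lra.
apply: (@le_of_log_growth _ _ (ln (INR K))) => n.
set x := INR n.+1.
have x_pos : (0 < x)%R by apply: lt_0_INR; apply/ltP.
have homG_lb : (x ^ a <= INR (hom G (T n)))%R.
  by rewrite -INR_expn; apply/le_INR/leP.
have homG_pos : (0 < INR (hom G (T n)))%R.
  by apply: Rlt_le_trans homG_lb; apply: pow_lt.
have homF_lb : (Rpower (INR (hom G (T n))) c <= INR (hom F (T n)))%R.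
  by have := admissible_c (T n); rewrite /rpow; case: Rlt_dec.
have homF_ub : (INR (hom F (T n)) <= INR K * x ^ b)%R.
  by rewrite -INR_expn -mult_INR multE; apply/le_INR/leP.
have rpow_pos : (0 < Rpower (INR (hom G (T n))) c)%R by apply: exp_pos.
have K_pos : (0 < INR K)%R.
  have := pow_lt _ b x_pos; have := pos_INR K; nra.
have ln_homG : (INR a * ln x <= ln (INR (hom G (T n))))%R.
  by rewrite -ln_pow //; apply: ln_le => //; apply: pow_lt.
have := ln_le _ _ rpow_pos (Rle_trans _ _ _ homF_lb homF_ub).
rewrite /Rpower ln_exp ln_mult ?ln_pow //; last exact: pow_lt.
have := Rmult_le_compat_l _ _ _ (Rlt_le _ _ c_gt0) ln_homG.
lra.
Qed.

Definition complete_graph (n : nat) : graph :=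
  @Graph 'I_n.+1 (fun _ _ => true) (ltac:(by rewrite card_ord)).

Lemma hom_complete_graph (H : graph) (n : nat) :
  hom H (complete_graph n) = n.+1 ^ #|vert H|.
Proof.
rewrite /hom -[X in _ = X ^ _](card_ord n.+1) -card_ffun; apply: eq_card => f.
by rewrite !inE; apply/forallP => x; apply/forallP => y; rewrite implybT.
Qed.

(* [n+1] isolated looped vertices: a homomorphism into it is exactly a
   colouring constant on weak components. *)
Definition loops_graph (n : nat) : graph :=
  @Graph 'I_n.+1 eq_op (ltac:(by rewrite card_ord)).

Section WeakComponents.
Variable H : graph.
Local Notation e := (symrel (@edge H)).

Lemma connect_sym_symrel : connect_sym e.
Proof. by apply: sym_connect_sym => x y; rewrite /symrel /= orbC. Qed.

Lemma CC_roots : CC H = #|roots e|.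
Proof. by apply: eq_card => x; rewrite !inE andbT. Qed.

Lemma CC_gt0 : (0 < CC H)%N.
Proof.
have [x _] := card_gt0P (vert_nonempty H).
rewrite CC_roots; apply/card_gt0P; exists (root e x).
exact: roots_root connect_sym_symrel x.
Qed.

Lemma hom_loops_graph_const (n : nat) (f : {ffun vert H -> vert (loops_graph n)}) :
  is_hom f -> forall x y, connect e x y -> f x = f y.
Proof.
move=> f_hom.
have f_edge u v : edge u v -> f u = f v.
  by move=> euv; apply/eqP; move/forallP/(_ u)/forallP/(_ v)/implyP: f_hom; apply.
have f_step u v : e u v -> f u = f v.
  by case/orP => [/f_edge | /f_edge /esym].
move=> x y /connectP [p]; elim: p x => [|z p IHp] x /=; first by move=> _ ->.
by case/andP => /f_step -> /IHp.
Qed.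

Definition component_of (x : vert H) : {r | roots e r} :=
  exist _ (root e x) (roots_root connect_sym_symrel x).

Lemma hom_loops_graph (n : nat) : hom H (loops_graph n) = n.+1 ^ CC H.
Proof.
pose lift (g : {ffun {r | roots e r} -> 'I_n.+1}) : {ffun vert H -> vert (loops_graph n)} :=
  [ffun x => g (component_of x)].
have lift_inj : injective lift.
  move=> g1 g2 /ffunP eq_lift; apply/ffunP => r; have := eq_lift (val r).
  by rewrite !ffunE; congr (_ = _); congr (_ _); apply: val_inj; apply/eqP; case: r.
have hom_codom : [pred f | is_hom f] =i codom lift.
  move=> f; rewrite !inE; apply/idP/codomP => [f_hom | [g ->]].
    exists [ffun r => f (val r)]; apply/ffunP => x; rewrite !ffunE /=.
    exact: hom_loops_graph_const f_hom _ _ (connect_root e x).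
  apply/forallP => x; apply/forallP => y; apply/implyP => exy; rewrite !ffunE /=.
  suff -> : component_of x = component_of y by [].
  apply: val_inj; apply/(rootP connect_sym_symrel)/connect1; by rewrite /symrel /= exy.
by rewrite /hom (eq_card hom_codom) card_codom // card_ffun card_ord card_sig CC_roots.
Qed.

End WeakComponents.

(* A looped centre [ord0] joined to [n+1] leaves: the leaf preimage of a
   homomorphism is independent, and any map from an independent set to the
   leaves extends to a homomorphism by sending everything else to the centre. *)
Definition star_graph (n : nat) : graph :=
  @Graph 'I_n.+2 (fun x y => (x == ord0) || (y == ord0)) (ltac:(by rewrite card_ord)).

Lemma card_star_leaves (n : nat) : #|predC1 (ord0 : vert (star_graph n))| = n.+1.
Proof. by rewrite cardC1 card_ord. Qed.

Section IndependentSets.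
Variable H : graph.

Definition independent (I : {set vert H}) : bool :=
  [forall x in I, forall y in I, ~~ edge x y].

Lemma card_independent_le_alpha (I : {set vert H}) : independent I -> (#|I| <= alpha H)%N.
Proof. exact: (@leq_bigmax_cond _ independent (fun I => #|I|)). Qed.

Lemma alpha_witness : exists2 I : {set vert H}, independent I & #|I| = alpha H.
Proof.
have indep0 : (0 < #|[pred I | independent I]|)%N.
  by apply/card_gt0P; exists set0; rewrite inE; apply/forallP => x; rewrite inE.
have [I I_indep alphaE] := eq_bigmax_cond (fun I : {set vert H} => #|I|) indep0.
by exists I; rewrite // /alpha alphaE.
Qed.

Lemma card_independent_le : (#|[pred I | independent I]| <= 2 ^ #|vert H|)%N.
Proof.
rewrite -cardsT -card_powerset; apply: subset_leq_card; apply/subsetP => I _.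
by rewrite powersetE subsetT.
Qed.

Lemma hom_star_graph_ge (n : nat) : (n.+1 ^ alpha H <= hom H (star_graph n))%N.
Proof.
have [I /forallP I_indep <-] := alpha_witness.
rewrite -(card_star_leaves n) -(card_pffun_on ord0).
apply: subset_leq_card; apply/subsetP => f /pffun_onP [f_supp _].
rewrite inE; apply/forallP => x; apply/forallP => y; apply/implyP => exy.
apply/negPn/negP; rewrite /= negb_or => /andP [fx fy].
have xI : x \in I by apply: (subsetP f_supp); rewrite inE.
have yI : y \in I by apply: (subsetP f_supp); rewrite inE.
by move/implyP/(_ xI)/forallP/(_ y)/implyP/(_ yI): (I_indep x); rewrite exy.
Qed.

Definition leaf_set (n : nat) (f : {ffun vert H -> vert (star_graph n)}) : {set vert H} :=
  [set x | f x != ord0].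

Lemma independent_leaf_set (n : nat) (f : {ffun vert H -> vert (star_graph n)}) :
  is_hom f -> independent (leaf_set n f).
Proof.
move=> /forallP f_hom; apply/forallP => x; apply/implyP; rewrite inE => fx.
apply/forallP => y; apply/implyP; rewrite inE => fy; apply/negP => exy.
by move/forallP/(_ y)/implyP/(_ exy): (f_hom x); rewrite /= (negbTE fx) (negbTE fy).
Qed.

Lemma hom_star_graph_le (n : nat) :
  (hom H (star_graph n) <= 2 ^ #|vert H| * n.+1 ^ alpha H)%N.
Proof.
rewrite /hom -sum1_card (partition_big (leaf_set n) independent) /=; last first.
  by move=> f; rewrite inE; apply: independent_leaf_set.
apply: (@leq_trans (\sum_(S | independent S) n.+1 ^ alpha H)).
  apply: leq_sum => S S_indep; rewrite sum1dep_card.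
  apply: (@leq_trans (n.+1 ^ #|S|)); last first.
    by apply: leq_pexp2l => //; apply: card_independent_le_alpha.
  (* a homomorphism with leaf set S is determined by its values on S *)
  rewrite -[X in _ <= X ^ _](card_star_leaves n) -(card_pffun_on ord0).
  apply: subset_leq_card; apply/subsetP => f; rewrite !inE => /andP [_ /eqP <-].
  apply/pffun_onP; split => [|y /imageP [x]]; first by apply/subsetP => x; rewrite !inE.
  by rewrite !inE => fx ->.
by rewrite sum_nat_const leq_mul2r card_independent_le orbT.
Qed.

End IndependentSets.

Theorem mainTheorem6 (F G : graph) (hFG : hom_to F G) :
  HDE_le F G (INR #|vert F| / INR #|vert G|)%R /\
  HDE_le F G (INR (CC F) / INR (CC G))%R /\
  ((1 <= alpha G)%N -> HDE_le F G (INR (alpha F) / INR (alpha G))%R).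
Proof.
split; [|split].
- apply: (@HDE_le_of_growth F G complete_graph _ _ 1 (vert_nonempty G)) => n.
    by rewrite hom_complete_graph.
  by rewrite hom_complete_graph mul1n.
- apply: (@HDE_le_of_growth F G loops_graph _ _ 1 (CC_gt0 G)) => n.
    by rewrite hom_loops_graph.
  by rewrite hom_loops_graph mul1n.
- move=> alphaG_gt0.
  apply: (@HDE_le_of_growth F G star_graph _ _ _ alphaG_gt0) => n.
    exact: hom_star_graph_ge.
  exact: hom_star_graph_le.
Qed.
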